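(* Let $F$ be a finite set. Let ${\mathbb A}^F=(\underline{\mathbb A}^F,\mathbb C^F,e_F)$, where $\underline{\mathbb A}^F:\mathcal F_{ab}\to\mathcal Sets$ is the graded functor $\underline{\mathbb A}^F(D)^{(k)}=\coprod_{Y\subset F,\,|Y|=k}D^Y$ (homomorphisms acting componentwise), $\mathbb C^F=\mathrm{Spec}\,\mathbb C[x_j:j\in F]$, and $e_F(D)$ sends $(g_j)_{j\in Y}\in D^Y$ to the $\mathbb C$-algebra homomorphism $\mathbb C[x_j:j\in F]\to\mathbb C[D]$ with $x_j\mapsto g_j$ for $j\in Y$ and $x_j\mapsto0$ for $j\notin Y$. (Equivalently, for each character $\chi:D\to\mathbb C^*$ the corresponding $\mathbb C$-point is $(\xi_j)_{j\in F}$ with $\xi_j=\chi(g_j)$ if $j\in Y$ and $\xi_j=0$ otherwise.) Then ${\mathbb A}^F$ is an affine variety over $\mathbb F_1$, with $X_{\mathbb Z}=\mathrm{Spec}\,\mathbb Z[x_j:j\in F]$.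
   Context: $\mathcal F_{ab}$ is the category of finite abelian groups and group homomorphisms; $\mathbb Z[D],\mathbb C[D]$ are group rings. A gadget over $\mathbb F_1$ is a triple $X=(\underline X,X_{\mathbb C},e_X)$: a covariant functor $\underline X:\mathcal F_{ab}\to\mathcal Sets$, a variety $X_{\mathbb C}$ over $\mathbb C$, and a natural transformation $e_X$ from $\underline X$ to the functor $D\mapsto\mathrm{Hom}(\mathrm{Spec}\,\mathbb C[D],X_{\mathbb C})$ (for affine $X_{\mathbb C}=\mathrm{Spec}\,\mathcal O$ this is $\mathrm{Hom}_{\mathbb C\text{-alg}}(\mathcal O,\mathbb C[D])$). For an affine scheme of finite type $V=\mathrm{Spec}(\mathcal O)$ over $\mathbb Z$, the gadget $\mathcal G(V)$ has $\underline{\mathcal G(V)}(D)=\mathrm{Hom}(\mathcal O,\mathbb Z[D])$, $\mathcal G(V)_{\mathbb C}=V\otimes_{\mathbb Z}\mathbb C$, and $e$ given by applying $\otimes_{\mathbb Z}\mathbb C$. A morphism of gadgets $\phi:X\to Y$ is a pair $(\underline\phi,\phi_{\mathbb C})$ of a natural transformation $\underline\phi:\underline X\to\underline Y$ and a morphism of $\mathbb C$-varieties $\phi_{\mathbb C}:X_{\mathbb C}\to Y_{\mathbb C}$ such that $e_Y(D)\circ\underline\phi(D)=(\phi_{\mathbb C})_*\circ e_X(D)$ for all $D$. It is an immersion if $\phi_{\mathbb C}$ is an embedding and each $\underline\phi(D)$ is injective. A gadget is graded if $\underline X$ takes values in $\mathbb Z_{\ge0}$-graded sets $\underline X=\coprod_{k\ge0}\underline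 X^{(k)}$, and finite if every $\underline X(D)$ is finite. An affine variety over $\mathbb F_1$ is a finite graded gadget $X$ for which there exist an affine scheme of finite type $X_{\mathbb Z}$ over $\mathbb Z$ and an immersion $i:X\to\mathcal G(X_{\mathbb Z})$ such that for every affine scheme of finite type $V$ over $\mathbb Z$ and every morphism of gadgets $\varphi:X\to\mathcal G(V)$ there is a unique morphism $\varphi_{\mathbb Z}:X_{\mathbb Z}\to V$ with $\varphi=\mathcal G(\varphi_{\mathbb Z})\circ i$ (morphisms of gadgets ignore the grading). *)

From HB Require Import structures.
From mathcomp Require Import all_boot all_order all_algebra.
Set Implicit Arguments. Unset Strict Implicit. Unset Printing Implicit Defensive.
Import Order.TTheory GRing.Theory Num.Theory.
Local Open Scope ring_scope.

Section GR.
Variables (R : comNzRingType) (D : finZmodType).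
Definition gring : Type := {ffun D -> R}.
HB.instance Definition _ := GRing.Zmodule.on gring.
Definition gmul (f g : gring) : gring := [ffun x => \sum_y f y * g (x - y)].
Definition gone : gring := [ffun x => (x == 0)%:R].
Lemma gmulC : commutative gmul.
Proof.
move=> f g; apply/ffunP=> x; rewrite !ffunE.
rewrite (reindex_inj (can_inj (subKr x))) /=.
by apply: eq_bigr=> y _; rewrite subKr mulrC.
Qed.
Lemma gmul1 : left_id gone gmul.
Proof.
move=> f; apply/ffunP=> x; rewrite !ffunE (bigD1 0) //= big1 ?addr0.
  by rewrite ffunE eqxx mul1r subr0.
by move=> y /negPf ny; rewrite ffunE ny mul0r.
Qed.
Lemma gmulDl : left_distributive gmul +%R.
Proof.
move=> f g h; apply/ffunP=> x; rewrite !ffunE -big_split /=.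
by apply: eq_bigr=> y _; rewrite ffunE mulrDl.
Qed.
Lemma gmulA : associative gmul.
Proof.
move=> f g h; apply/ffunP=> x; rewrite !ffunE.
under eq_bigr do rewrite ffunE big_distrr /=.
under [RHS]eq_bigr do rewrite ffunE big_distrl /=.
rewrite [RHS]exchange_big /=; apply: eq_bigr=> z _.
rewrite [RHS](reindex_inj (addrI z)) /=.
apply: eq_bigr=> w _; rewrite mulrA; congr (_ * _ * _).
  by rewrite addrAC subrr add0r.
by rewrite opprD addrA.
Qed.
Lemma gone_neq0 : gone != 0.
Proof. by apply/eqP=> /ffunP /(_ 0); rewrite !ffunE eqxx => /eqP; rewrite oner_eq0. Qed.
HB.instance Definition _ := GRing.Zmodule_isComNzRing.Build gring gmulA gmulC gmul1 gmulDl gone_neq0.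
End GR.

Definition gdelta (R : comNzRingType) (D : finZmodType) (g : D) : gring R D :=
  [ffun x => (x == g)%:R].
Definition gscal (R : comNzRingType) (D : finZmodType) (c : R) : gring R D :=
  [ffun x => if x == 0 then c else 0].
Definition gcoef (C : comNzRingType) (D : finZmodType) (f : gring int D) : gring C D :=
  [ffun x => (f x)%:~R].
Definition gmap (R : comNzRingType) (D D' : finZmodType) (h : {additive D -> D'})
  (f : gring R D) : gring R D' := [ffun y => \sum_(x | h x == y) f x].

Fixpoint mpoly (R : comNzRingType) (n : nat) : comNzRingType :=
  if n is n'.+1 then ({poly mpoly R n'} : comNzRingType) else R.

Fixpoint mconst (R : comNzRingType) (n : nat) : R -> mpoly R n :=
  match n return R -> mpoly R n with
  | 0 => fun c => c
  | n'.+1 => fun c => (mconst n' c)%:P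
  end.

Fixpoint mvar (R : comNzRingType) (n : nat) : 'I_n -> mpoly R n :=
  match n return 'I_n -> mpoly R n with
  | 0 => fun _ => 0
  | n'.+1 => fun i => if unlift ord_max i is Some j then (mvar R j)%:P else 'X
  end.

Fixpoint meval (R : comNzRingType) (B : comPzRingType) (c : R -> B) (n : nat)
  : ('I_n -> B) -> mpoly R n -> B :=
  match n return ('I_n -> B) -> mpoly R n -> B with
  | 0 => fun _ p => c p
  | n'.+1 => fun v p =>
      \sum_(i < size p) meval c (fun k => v (lift ord_max k)) p`_i * v ord_max ^+ i
  end.

Definition fin_gen (O : comPzRingType) : Prop :=
  exists s : seq O, forall S : {pred O}, subring_closed S ->
    {subset s <= S} -> forall x, x \in S.

Record gadget (C : numClosedFieldType) := Gadget {
  gfun : finZmodType -> Type;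
  gfmap : forall D D' : finZmodType, {additive D -> D'} -> gfun D -> gfun D';
  ggrade : forall D : finZmodType, gfun D -> nat;
  gcoord : comNzRingType;
  gcoord_const : C -> gcoord;
  ge : forall D : finZmodType, gfun D -> gcoord -> gring C D
}.

Section GadgetDefs.
Variables (C : numClosedFieldType) (X : gadget C).

Definition gadget_finite : Prop :=
  forall D : finZmodType, exists (n : nat) (f : 'I_n -> gfun X D), forall a, exists k, f k = a.

Definition gmorph_G (O : comPzRingType)
  (u : forall D : finZmodType, gfun X D -> {rmorphism O -> gring int D})
  (uC : {rmorphism O -> gcoord X}) : Prop :=
  (forall (D D' : finZmodType) (h : {additive D -> D'}) (a : gfun X D),
      u D' (@gfmap C X D D' h a) =1 gmap h \o u D a)
  /\ (forall (D : finZmodType) (a : gfun X D),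
      @ge C X D a \o uC =1 @gcoef C D \o u D a).

Definition closed_embedding (O : comPzRingType) (uC : O -> gcoord X) : Prop :=
  forall S : {pred gcoord X}, subring_closed S ->
    (forall k : C, @gcoord_const C X k \in S) -> (forall o, uC o \in S) ->
    forall b, b \in S.

Definition gimmersion_G (O : comPzRingType)
  (u : forall D : finZmodType, gfun X D -> {rmorphism O -> gring int D})
  (uC : {rmorphism O -> gcoord X}) : Prop :=
  gmorph_G u uC /\ closed_embedding uC /\
  (forall (D : finZmodType) (a b : gfun X D), u D a =1 u D b -> a = b).

Definition affine_F1_with (OZ : comPzRingType) : Prop :=
  gadget_finite /\ fin_gen OZ /\
  exists (i : forall D : finZmodType, gfun X D -> {rmorphism OZ -> gring int D})
         (iC : {rmorphism OZ -> gcoord X}),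
    gimmersion_G i iC /\
    forall (O : comPzRingType), fin_gen O ->
    forall (u : forall D : finZmodType, gfun X D -> {rmorphism O -> gring int D})
           (uC : {rmorphism O -> gcoord X}),
      gmorph_G u uC ->
      exists psi : {rmorphism O -> OZ},
        ((forall (D : finZmodType) (a : gfun X D), u D a =1 i D a \o psi)
          /\ uC =1 iC \o psi)
        /\ forall psi' : {rmorphism O -> OZ},
             ((forall (D : finZmodType) (a : gfun X D), u D a =1 i D a \o psi')
               /\ uC =1 iC \o psi') -> psi' =1 psi.
End GadgetDefs.

Section AF.
Variables (C : numClosedFieldType) (F : finType).

Definition AF (D : finZmodType) : Type :=
  {Y : {set F} & {ffun {j : F | j \in Y} -> D}}.

Definition AFmap (D D' : finZmodType) (h : {additive D -> D'}) (a : AF D) : AF D' :=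
  existT _ (projT1 a) [ffun j => h (projT2 a j)].

Definition AFgrade (D : finZmodType) (a : AF D) : nat := #|projT1 a|.

Definition AFval (R : comNzRingType) (D : finZmodType) (a : AF D) (j : F) : gring R D :=
  match insub j : option {j : F | j \in projT1 a} with
  | Some j' => gdelta R (projT2 a j')
  | None => 0
  end.

Definition AFe (D : finZmodType) (a : AF D) : mpoly C #|F| -> gring C D :=
  meval (@gscal C D) (fun k => AFval C a (enum_val k)).

Definition AFgadget : gadget C :=
  @Gadget C AF AFmap AFgrade (mpoly C #|F|) (@mconst C #|F|) AFe.
End AF.

From HB Require Import structures.
From mathcomp Require Import all_boot all_order all_algebra.
Set Implicit Arguments. Unset Strict Implicit. Unset Printing Implicit Defensive.
Import GRing.Theory.
Local Open Scope ring_scope.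

(* The immersion i : A^F -> G(Spec Z[x]) sends a point (g_j)_(j in Y) of A^F(D)
   to the ring morphism iF : Z[x] -> Z[D], x_j |-> [g_j] (j in Y), 0 (j notin Y);
   its complex part is the base change iC : Z[x] -> C[x].  The point is recovered
   from the images of the x_j, and C[x] is generated by constants and iC(Z[x]),
   so (iF, iC) is an immersion.

   Let (u, uC) : A^F -> G(Spec O) be a gadget morphism.  The
   key fact is an integrality criterion: a complex polynomial p such that, for
   every finite abelian group D and every g in D^n, the evaluation
   p([g_1], ..., [g_n]) in C[D] has integer coefficients, has integer
   coefficients.  It is proved by induction on n: the coefficient of x_(n+1)^k is
   read off from the evaluation over D x Z/(m+2) with x_(n+1) |-> [(0,1)], at the
   component (x, k).  Evaluating uC(o) at full points (Y = F) gives u(o), so uC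
   takes values in the image of the injective map iC, hence factors uniquely as
   iC o psi; injectivity of Z[D] -> C[D] then gives u = iF o psi. *)

Section GroupRing.
Variables (R : comNzRingType) (D : finZmodType).
Implicit Types (f : gring R D) (x a b : D).

Lemma gmulE f f' x : (f * f') x = \sum_y f y * f' (x - y).
Proof. by rewrite /GRing.mul /= ffunE. Qed.

Lemma goneE x : (1 : gring R D) x = (x == 0)%:R.
Proof. by rewrite /GRing.one /= ffunE. Qed.

Lemma gdeltaE a x : gdelta R a x = (x == a)%:R.
Proof. by rewrite ffunE. Qed.

Lemma gmul_delta f a x : (f * gdelta R a) x = f (x - a).
Proof.
rewrite gmulE (bigD1 (x - a)) //= big1 ?addr0.
  by rewrite gdeltaE opprB addrCA subrr addr0 eqxx mulr1.
move=> y ny; rewrite gdeltaE; case: eqP; rewrite ?mulr0 // => E.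
by case/eqP: ny; rewrite -E opprB addrCA subrr addr0.
Qed.

Lemma gdeltaD a b : gdelta R (a + b) = gdelta R a * gdelta R b.
Proof. by apply/ffunP=> x; rewrite gmul_delta !gdeltaE subr_eq. Qed.

Lemma gdelta0 : gdelta R (0 : D) = 1.
Proof. by apply/ffunP=> x; rewrite gdeltaE. Qed.

Lemma gdeltaX a i : gdelta R a ^+ i = gdelta R (a *+ i).
Proof.
elim: i => [|i IH]; first by rewrite expr0 mulr0n gdelta0.
by rewrite exprS IH -gdeltaD mulrS.
Qed.

Lemma gdelta_neq0 a : gdelta R a != 0.
Proof. by apply/eqP=> /ffunP /(_ a); rewrite gdeltaE ffunE eqxx => /eqP; rewrite oner_eq0. Qed.

Lemma gscalE (c : R) x : gscal D c x = if x == 0 then c else 0.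
Proof. by rewrite ffunE. Qed.

Lemma gscal_is_zmod_morphism : zmod_morphism (@gscal R D).
Proof. by move=> c d; apply/ffunP=> x; rewrite !ffunE; case: eqP; rewrite ?subr0. Qed.

Lemma gscal_is_monoid_morphism : monoid_morphism (@gscal R D).
Proof.
split; first by apply/ffunP=> x; rewrite gscalE goneE; case: eqP.
move=> c d; apply/ffunP=> x; rewrite gmulE (bigD1 0) //= big1 ?addr0.
  by rewrite !gscalE eqxx subr0; case: eqP; rewrite ?mulr0.
by move=> y /negPf ny; rewrite gscalE ny mul0r.
Qed.

HB.instance Definition _ := GRing.isZmodMorphism.Build R (gring R D) (@gscal R D)
  gscal_is_zmod_morphism.
HB.instance Definition _ := GRing.isMonoidMorphism.Build R (gring R D) (@gscal R D)
  gscal_is_monoid_morphism.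
End GroupRing.

Section Pushforward.
Variables (R : comNzRingType) (D D' : finZmodType) (h : {additive D -> D'}).
Implicit Types (f : gring R D).

Lemma gmapE f y : gmap h f y = \sum_(x | h x == y) f x.
Proof. by rewrite ffunE. Qed.

Lemma gmap_is_zmod_morphism : zmod_morphism (gmap (R:=R) h).
Proof.
move=> f f'; apply/ffunP=> y; rewrite !ffunE -sumrN -big_split /=.
by apply: eq_bigr=> x _; rewrite !ffunE.
Qed.

(* Convolution commutes with pushforward because [h] is additive. *)
Lemma gmap_is_monoid_morphism : monoid_morphism (gmap (R:=R) h).
Proof.
split.
  apply/ffunP=> y; rewrite gmapE goneE big_mkcond /= (bigD1 0) //= big1 ?addr0.
    by rewrite goneE eqxx raddf0 eq_sym; case: eqP.
  by move=> x nx; rewrite goneE (negPf nx); case: ifP.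
move=> f f'; apply/ffunP=> y; rewrite gmapE.
under eq_bigr do rewrite gmulE.
rewrite gmulE.
transitivity (\sum_z \sum_w (if h (w + z) == y then f z * f' w else 0)).
  rewrite exchange_big /=; apply: eq_bigr=> z _; rewrite big_mkcond /=.
  rewrite (reindex_inj (addIr z)) /=; apply: eq_bigr=> w _.
  by case: ifP; rewrite ?addrK.
under [RHS]eq_bigr do rewrite gmapE big_distrl /=.
under [RHS]eq_bigr do under eq_bigr do rewrite gmapE big_distrr /=.
under [RHS]eq_bigr do rewrite big_mkcond /=.
rewrite [RHS]exchange_big /=; apply: eq_bigr=> z _.
rewrite [RHS](bigD1 (h z)) //= eqxx [X in _ + X]big1 ?addr0; last first.
  by move=> w nw; rewrite eq_sym (negPf nw).
rewrite [RHS]big_mkcond /=; apply: eq_bigr=> w _.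
by rewrite raddfD eq_sym -subr_eq eq_sym; case: ifP.
Qed.

HB.instance Definition _ := GRing.isZmodMorphism.Build (gring R D) (gring R D')
  (gmap h) gmap_is_zmod_morphism.
HB.instance Definition _ := GRing.isMonoidMorphism.Build (gring R D) (gring R D')
  (gmap h) gmap_is_monoid_morphism.

Lemma gmap_delta a : gmap h (gdelta R a) = gdelta R (h a).
Proof.
apply/ffunP=> y; rewrite gmapE gdeltaE big_mkcond (bigD1 a) //= big1 ?addr0.
  by rewrite gdeltaE eqxx eq_sym; case: eqP.
by move=> x nx; rewrite gdeltaE (negPf nx); case: ifP.
Qed.

Lemma gmap_scal (c : R) : gmap h (gscal D c) = gscal D' c.
Proof.
apply/ffunP=> y; rewrite gmapE gscalE big_mkcond (bigD1 0) //= big1 ?addr0.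
  by rewrite gscalE eqxx raddf0 eq_sym; case: eqP.
by move=> x nx; rewrite gscalE (negPf nx); case: ifP.
Qed.
End Pushforward.

Section CoefficientExtension.
Variables (C : numClosedFieldType) (D : finZmodType).

Lemma gcoefE (f : gring int D) x : gcoef C f x = (f x)%:~R.
Proof. by rewrite ffunE. Qed.

Lemma gcoef_is_zmod_morphism : zmod_morphism (gcoef C (D:=D)).
Proof. by move=> f g; apply/ffunP=> x; rewrite !ffunE intrB. Qed.

Lemma gcoef_is_monoid_morphism : monoid_morphism (gcoef C (D:=D)).
Proof.
split; first by apply/ffunP=> x; rewrite gcoefE !goneE; case: eqP.
move=> f g; apply/ffunP=> x; rewrite gcoefE !gmulE rmorph_sum /=.
by apply: eq_bigr=> y _; rewrite intrM !gcoefE.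
Qed.

HB.instance Definition _ := GRing.isZmodMorphism.Build (gring int D) (gring C D)
  (@gcoef C D) gcoef_is_zmod_morphism.
HB.instance Definition _ := GRing.isMonoidMorphism.Build (gring int D) (gring C D)
  (@gcoef C D) gcoef_is_monoid_morphism.

Lemma gcoef_delta (a : D) : gcoef C (gdelta int a) = gdelta C a.
Proof. by apply/ffunP=> x; rewrite gcoefE !gdeltaE; case: eqP. Qed.

Lemma gcoef_inj : injective (gcoef C (D:=D)).
Proof. by move=> f g /ffunP E; apply/ffunP=> x; move: (E x); rewrite !gcoefE => /intr_inj. Qed.
End CoefficientExtension.

Section Evaluation.
Variables (R B : comNzRingType).

Lemma meval_horner (c : R -> B) n (v : 'I_n.+1 -> B) (p : mpoly R n.+1) :
  meval c v p =
  (map_poly (meval c (fun k => v (lift ord_max k))) (p : {poly mpoly R n})).[v ord_max].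
Proof.
rewrite /= (horner_coef_wide _ (size_poly _ _)); apply: eq_bigr=> i _.
by rewrite coef_poly ltn_ord.
Qed.

Lemma meval_is_ring_morphism (c : {rmorphism R -> B}) n (v : 'I_n -> B) :
  zmod_morphism (meval c v) * monoid_morphism (meval c v).
Proof.
elim: n v => [|n IH] v.
  by split; [exact: rmorphB | split; [exact: rmorph1 | exact: rmorphM]].
have [evalB evalM] := IH (fun k => v (lift ord_max k)).
pose ev : {rmorphism mpoly R n -> B} := HB.pack (meval c (fun k => v (lift ord_max k)))
  (GRing.isZmodMorphism.Build _ _ _ evalB) (GRing.isMonoidMorphism.Build _ _ _ evalM).
have ev_comm : commr_rmorph ev (v ord_max) by move=> x; exact: mulrC.
have evalE (p : mpoly R n.+1) : meval c v p = horner_morph ev_comm p by rewrite meval_horner.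
split; first by move=> p q; rewrite !evalE rmorphB.
by split=> [|p q]; rewrite !evalE ?rmorph1 ?rmorphM.
Qed.

HB.instance Definition _ (c : {rmorphism R -> B}) n (v : 'I_n -> B) :=
  GRing.isZmodMorphism.Build (mpoly R n) B (meval c v) (meval_is_ring_morphism c v).1.
HB.instance Definition _ (c : {rmorphism R -> B}) n (v : 'I_n -> B) :=
  GRing.isMonoidMorphism.Build (mpoly R n) B (meval c v) (meval_is_ring_morphism c v).2.

Lemma meval_mvar (c : {rmorphism R -> B}) n (v : 'I_n -> B) k : meval c v (mvar R k) = v k.
Proof.
elim: n v k => [|n IH] v k; first by case: k.
rewrite [mvar _ _]/=; case: unliftP => [j ->|->]; rewrite meval_horner.
  by rewrite map_polyC hornerC; apply: IH.
by rewrite map_polyX hornerX.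
Qed.
End Evaluation.

Lemma eq_meval (R : comNzRingType) (B : comPzRingType) n (c c' : R -> B) (v v' : 'I_n -> B) :
  c =1 c' -> v =1 v' -> meval c v =1 meval c' v'.
Proof.
elim: n v v' => [|n IH] v v' Ec Ev p /=; first exact: Ec.
by apply: eq_bigr=> i _; rewrite Ev (IH _ (fun k => v' (lift ord_max k))).
Qed.

Lemma rmorph_meval (R : comNzRingType) (B B' : comPzRingType) (phi : {rmorphism B -> B'})
    (c : R -> B) n (v : 'I_n -> B) (p : mpoly R n) :
  phi (meval c v p) = meval (phi \o c) (phi \o v) p.
Proof.
elim: n v p => [|n IH] v p //=; rewrite rmorph_sum; apply: eq_bigr=> i _.
by rewrite rmorphM rmorphXn IH.
Qed.

Lemma mpoly_generated (R : comNzRingType) n (S : {pred mpoly R n}) : subring_closed S ->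
  (forall r, mconst n r \in S) -> (forall k, mvar R k \in S) -> forall p, p \in S.
Proof.
elim: n S => [|n IH] S S_subring S_const S_var p; first exact: S_const.
pose SS : subringClosed _ := HB.pack (S : _ -> bool) (GRing.isSubringClosed.Build _ S S_subring).
have S_polyC (r : mpoly R n) : (r%:P : {poly mpoly R n}) \in SS.
  apply: (IH [pred r | (r%:P : {poly mpoly R n}) \in S]) => [|r'|k]; rewrite ?inE.
  - split=> [|u v|u v]; rewrite !inE ?polyC1 ?polyCB ?polyCM ?(rpred1 SS) //.
      exact: (rpredB (S:=SS)).
    exact: (rpredM (s:=SS)).
  - exact: S_const r'.
  - by have := S_var (lift ord_max k); rewrite /= liftK.
have S_X : ('X : {poly mpoly R n}) \in SS by have := S_var ord_max; rewrite /= unlift_none.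
suff : p \in SS by [].
by rewrite -[p]coefK poly_def; apply: rpred_sum => i _; rewrite -mul_polyC rpredM ?rpredX.
Qed.

Lemma mconst_int n (z : int) : mconst n z = z%:~R :> mpoly int n.
Proof. by elim: n => [|n IH]; [rewrite intz | rewrite [mconst _ _]/= IH rmorph_int]. Qed.

Lemma fin_gen_mpoly n : fin_gen (mpoly int n).
Proof.
exists [seq mvar int k | k <- enum 'I_n] => S S_subring S_gen.
pose SS : subringClosed _ := HB.pack (S : _ -> bool) (GRing.isSubringClosed.Build _ S S_subring).
apply: mpoly_generated => // [z|k]; first by rewrite mconst_int (rpred_int SS).
by apply: S_gen; apply: map_f; rewrite mem_enum.
Qed.

Section BaseChange.
Variable C : numClosedFieldType.

Definition iC {n : nat} : {rmorphism mpoly int n -> mpoly C n} := meval (intmul 1) (@mvar C n).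

Lemma iC_mvar n (k : 'I_n) : iC (mvar int k) = mvar C k.
Proof. exact: meval_mvar. Qed.

Lemma hornerX_mapC (R : comNzRingType) (r : {poly R}) : (map_poly polyC r).['X] = r.
Proof.
rewrite horner_coef size_map_polyC -[RHS]coefK poly_def.
by apply: eq_bigr=> i _; rewrite coef_map /= mul_polyC.
Qed.

Lemma iC_S n (q : mpoly int n.+1) : iC q = map_poly (@iC n) (q : {poly mpoly int n}).
Proof.
have -> : iC q = meval (intmul 1) (@mvar C n.+1) q by [].
rewrite meval_horner [mvar C _]/= unlift_none.
rewrite (eq_map_poly (g := polyC \o @iC n)) ?map_poly_comp ?hornerX_mapC // => r.
rewrite /= rmorph_meval; apply: eq_meval => [z|k] /=; first by rewrite rmorph_int.
by rewrite liftK.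
Qed.

Lemma iC_inj n : injective (@iC n).
Proof.
elim: n => [|n IH] p q; first by move=> /intr_inj.
rewrite !iC_S => /polyP E; apply/polyP=> i; apply: IH.
by move: (E i); rewrite !coef_map.
Qed.
End BaseChange.
Arguments iC {C n}.

Definition zprod (D T : finZmodType) : Type := (D * T)%type.
HB.instance Definition _ (D T : finZmodType) := GRing.Zmodule.on (zprod D T).
HB.instance Definition _ (D T : finZmodType) := Finite.on (zprod D T).

Section Integrality.
Variable C : numClosedFieldType.

Definition grouplike_integral n (p : mpoly C n) : Prop :=
  forall (D : finZmodType) (g : 'I_n -> D) (x : D),
    exists z : int, meval (@gscal C D) (fun k => gdelta C (g k)) p x = z%:~R.

Section Component.
Variables (D T : finZmodType).

Definition zinl (x : D) : zprod D T := (x, 0).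

Lemma zinl_is_zmod_morphism : zmod_morphism zinl.
Proof. by move=> x y; apply/eqP; rewrite xpair_eqE /= subr0 !eqxx. Qed.
HB.instance Definition _ := GRing.isZmodMorphism.Build D (zprod D T) zinl
  zinl_is_zmod_morphism.

Lemma gmap_zinl (f : gring C D) x (s : T) :
  gmap zinl f (x, s) = if s == 0 then f x else 0.
Proof.
rewrite gmapE big_mkcond (bigD1 x) //= big1 ?addr0.
  by rewrite /= xpair_eqE eqxx eq_sym; case: (s == 0).
by move=> y ny; rewrite /= xpair_eqE (negPf ny).
Qed.

Definition ext_point n (t : T) (g : 'I_n -> D) (j : 'I_n.+1) : zprod D T :=
  if unlift ord_max j is Some j' then zinl (g j') else (0, t).

Lemma zprod_muln (a : zprod D T) i : a *+ i = (a.1 *+ i, a.2 *+ i).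
Proof. by elim: i => [|i IH]; rewrite ?mulr0n // !mulrS IH. Qed.
End Component.

Lemma Zp_nat_eq m i k : (i < m.+2)%N -> (k < m.+2)%N ->
  ((i%:R : 'Z_m.+2) == k%:R) = (i == k).
Proof.
move=> lt_i lt_k; apply/eqP/eqP=> [/(congr1 (@nat_of_ord _))|->] //.
by rewrite !val_Zp_nat // !modn_small.
Qed.

(* Evaluating at [ext_point g] over [D x Z/(m+2)] and reading the component
   [(x, k)] isolates the coefficient of [x_(n+1)^k]: the key to integrality. *)
Lemma meval_ext_point n m (p : mpoly C n.+1) (D : finZmodType) (g : 'I_n -> D) x k :
    (size (p : {poly mpoly C n}) <= m.+2)%N -> (k < m.+2)%N ->
  meval (@gscal C _) (fun j => gdelta C (ext_point (1 : 'Z_m.+2) g j)) p (x, k%:R)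
    = meval (@gscal C D) (fun j => gdelta C (g j)) (p : {poly mpoly C n})`_k x.
Proof.
move=> size_p lt_k.
set ev := meval (@gscal C D) (fun j => gdelta C (g j)).
have coefE (r : mpoly C n) :
    meval (@gscal C _) (fun j : 'I_n => gdelta C (ext_point (1 : 'Z_m.+2) g (lift ord_max j))) r
    = gmap (@zinl D 'Z_m.+2) (ev r).
  rewrite rmorph_meval; apply: eq_meval => [c|j] /=; first by rewrite gmap_scal.
  by rewrite gmap_delta /ext_point liftK.
rewrite meval_horner (horner_coef_wide _ (leq_trans (size_poly _ _) size_p)).
have shiftE i : (x, k%:R) - (0, 1) *+ i = (x, k%:R - i%:R) :> zprod D 'Z_m.+2.
  by rewrite zprod_muln /= mul0rn; apply/eqP; rewrite xpair_eqE /= subr0 !eqxx.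
rewrite sum_ffunE (bigD1 (Ordinal lt_k)) //= big1 ?addr0 => [|i ne_ik];
  rewrite coef_map /= coefE /ext_point unlift_none gdeltaX gmul_delta shiftE gmap_zinl.
  by rewrite subrr eqxx.
rewrite subr_eq0 Zp_nat_eq //; case: eqP => // Eki.
by case/eqP: ne_ik; apply: val_inj.
Qed.

Lemma grouplike_integral_coef n (p : mpoly C n.+1) :
  grouplike_integral p -> forall k, grouplike_integral (p : {poly mpoly C n})`_k.
Proof.
move=> p_int k D g x.
pose m := (size (p : {poly mpoly C n}) + k)%N.
have size_p : (size (p : {poly mpoly C n}) <= m.+2)%N by rewrite -!addnS leq_addr.
have lt_k : (k < m.+2)%N by rewrite -!addnS ltn_addl.
have [z Hz] := p_int _ (ext_point (1 : 'Z_m.+2) g) (x, k%:R).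
by exists z; rewrite -(meval_ext_point _ _ size_p lt_k) Hz.
Qed.

Lemma grouplike_integral_iC n (p : mpoly C n) : grouplike_integral p -> exists q, iC q = p.
Proof.
elim: n p => [|n IH] p p_int.
  have [z Hz] := p_int ('Z_2 : finZmodType) (fun _ => 0) 0.
  by exists z; move: Hz; rewrite /= gscalE eqxx.
have coef_iC i : exists q, iC q == (p : {poly mpoly C n})`_i.
  by have [q <-] := IH _ (grouplike_integral_coef p_int i); exists q.
exists (\poly_(i < size (p : {poly mpoly C n})) xchoose (coef_iC i)).
rewrite iC_S; apply/polyP=> i; rewrite coef_map coef_poly.
case: ltnP => [_|le_p_i]; first exact/eqP/(xchooseP (coef_iC i)).
by rewrite raddf0 nth_default.
Qed.
End Integrality.

Lemma rmorph_factor (O A B : pzRingType) (j : {rmorphism A -> B}) (f : {rmorphism O -> B}) :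
  injective j -> (forall o, exists a, j a = f o) ->
  exists psi : {rmorphism O -> A}, forall o, j (psi o) = f o.
Proof.
move=> j_inj f_im.
have f_im' o : exists a, j a == f o by have [a <-] := f_im o; exists a.
pose psi o := xchoose (f_im' o).
have psiE o : j (psi o) = f o by apply/eqP/(xchooseP (f_im' o)).
have psiB : zmod_morphism psi by move=> x y; apply: j_inj; rewrite rmorphB !psiE rmorphB.
have psiM : monoid_morphism psi.
  by split=> [|x y]; apply: j_inj; rewrite ?rmorph1 ?rmorphM !psiE ?rmorph1 ?rmorphM.
pose psiR : {rmorphism O -> A} := HB.pack psi
  (GRing.isZmodMorphism.Build _ _ _ psiB) (GRing.isMonoidMorphism.Build _ _ _ psiM).
by exists psiR.
Qed.

Section AffineSpace.
Variables (C : numClosedFieldType) (F : finType).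
Local Notation n := #|F|.

Lemma AFval_map (R : comNzRingType) (D D' : finZmodType) (h : {additive D -> D'})
    (a : AF F D) j :
  AFval R (AFmap h a) j = gmap h (AFval R a j).
Proof.
case: a => Y f; rewrite /AFval /=; case: (insub j) => [j'|]; first by rewrite ffunE gmap_delta.
by rewrite raddf0.
Qed.

Lemma AFval_coef (D : finZmodType) (a : AF F D) j : gcoef C (AFval int a j) = AFval C a j.
Proof.
case: a => Y f; rewrite /AFval /=; case: (insub j) => [j'|]; first by rewrite gcoef_delta.
by rewrite raddf0.
Qed.

(* A point of [A^F] is determined by its coordinates, as delta functions are nonzero. *)
Lemma AFval_inj (R : comNzRingType) (D : finZmodType) (a b : AF F D) :
  (forall j, AFval R a j = AFval R b j) -> a = b.
Proof.
case: a => Y f; case: b => Y' f' E.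
have EY : Y = Y'.
  apply/setP=> j; have := E j; rewrite /AFval /=.
  case: insubP => [j1 Yj _|/negPf nYj]; case: insubP => [j2 Yj' _|/negPf nYj'] //=.
  - by rewrite Yj Yj'.
  - by move=> E1; have := gdelta_neq0 R (f j1); rewrite E1 eqxx.
  - by move=> E1; have := gdelta_neq0 R (f' j2); rewrite -E1 eqxx.
  by rewrite nYj nYj'.
subst Y'; congr existT; apply/ffunP=> j; have := E (val j); rewrite /AFval /= !valK.
move/ffunP=> /(_ (f j)); rewrite !gdeltaE eqxx.
by case: eqP => // _ /eqP /esym /eqP; rewrite oner_eq0.
Qed.

Definition afull (D : finZmodType) (g : 'I_n -> D) : AF F D :=
  existT _ [set: F] [ffun j => g (enum_rank (val j))].

Lemma AFval_full (R : comNzRingType) (D : finZmodType) (g : 'I_n -> D) k :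
  AFval R (afull g) (enum_val k) = gdelta R (g k).
Proof. by rewrite /AFval /= insubT ?inE // => Hk; rewrite ffunE /= enum_valK. Qed.

Definition iF (D : finZmodType) (a : AF F D) : {rmorphism mpoly int n -> gring int D} :=
  meval (@gscal int D) (fun k => AFval int a (enum_val k)).

Lemma iF_natural (D D' : finZmodType) (h : {additive D -> D'}) (a : AF F D) p :
  iF (AFmap h a) p = gmap h (iF a p).
Proof.
rewrite [RHS]rmorph_meval; apply: eq_meval => [c|k] /=; first by rewrite gmap_scal.
by rewrite AFval_map.
Qed.

Lemma iF_compatible (D : finZmodType) (a : AF F D) p : AFe a (iC p) = gcoef C (iF a p).
Proof.
rewrite /AFe rmorph_meval [RHS]rmorph_meval; apply: eq_meval => [z|k] /=.
  by rewrite rmorph_int -[z in RHS]intz !rmorph_int.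
by rewrite meval_mvar AFval_coef.
Qed.

Lemma AF_finite : gadget_finite (AFgadget C F).
Proof.
move=> D; exists #|{: AF F D}|, (fun k => enum_val k) => a.
by exists (enum_rank (a : AF F D)); rewrite enum_rankK.
Qed.

Lemma iF_gmorph : gmorph_G (X := AFgadget C F) iF iC.
Proof. by split=> [D D' h a p|D a p]; [exact: iF_natural | exact: iF_compatible]. Qed.

(* [(iF, iC)] is an immersion: [iC] is a closed embedding because [C[x]] is
   generated by the constants and the variables [x_j = iC x_j], and [iF] is
   injective on points because the coordinates of [a] are the images of the [x_j]. *)
Lemma iF_immersion : gimmersion_G (X := AFgadget C F) iF iC.
Proof.
split; first exact: iF_gmorph.
split=> [S S_subring S_const S_iC b|D a b E].
  by apply: mpoly_generated => // k; rewrite -iC_mvar; apply: S_iC.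
apply: (@AFval_inj int) => j.
by have := E (mvar int (enum_rank j)); rewrite /iF /= !meval_mvar enum_rankK.
Qed.

(* The complex part [uC] of any gadget morphism into [G(Spec O)] takes values
   with integer coefficients: evaluated at a full point [afull g], [uC o] agrees
   with the integral element [u D (afull g) o] of [Z[D]]. *)
Lemma gmorph_integral (O : comPzRingType)
    (u : forall D : finZmodType, AF F D -> {rmorphism O -> gring int D})
    (uC : {rmorphism O -> mpoly C n}) :
  gmorph_G (X := AFgadget C F) u uC -> forall o, exists q, iC q = uC o.
Proof.
move=> [_ u_compat] o; apply: grouplike_integral_iC => D g x.
have uE := u_compat D (afull g) o; rewrite /= in uE.
have g_coords : (fun k => AFval C (afull g) (enum_val k)) =1 (fun k => gdelta C (g k)).
  by move=> k; rewrite AFval_full.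
by exists (u D (afull g) o x); rewrite -gcoefE -uE /AFe (eq_meval (frefl _) g_coords).
Qed.

(* Once [uC] factors through [iC], so does [u] through [iF], since [Z[D] -> C[D]]
   is injective. *)
Lemma gmorph_factor (O : comPzRingType)
    (u : forall D : finZmodType, AF F D -> {rmorphism O -> gring int D})
    (uC : {rmorphism O -> mpoly C n}) (psi : {rmorphism O -> mpoly int n}) :
  gmorph_G (X := AFgadget C F) u uC -> (forall o, iC (psi o) = uC o) ->
  forall (D : finZmodType) (a : AF F D), u D a =1 iF a \o psi.
Proof.
move=> [_ u_compat] psiE D a o; apply: (@gcoef_inj C D).
by rewrite /= -iF_compatible psiE; exact: (esym (u_compat D a o)).
Qed.
End AffineSpace.

Theorem proposition3p2 (C : numClosedFieldType) (F : finType) :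
  affine_F1_with (AFgadget C F) (mpoly int #|F|).
Proof.
split; first exact: AF_finite.
split; first exact: fin_gen_mpoly.
exists (@iF F), iC; split; first exact: iF_immersion.
move=> O _ u uC u_gmorph.
have [psi psiE] := rmorph_factor (@iC_inj C _) (gmorph_integral u_gmorph).
exists psi; split; first by split=> [|o]; [exact: (gmorph_factor u_gmorph psiE) | rewrite /= psiE].
by move=> psi' [_ psi'E] o; apply: (@iC_inj C); rewrite psiE (psi'E o).
Qed.
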